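(* Let $\mathcal{X}$ be a set and $\mathcal{H}\subseteq\{0,1\}^{\mathcal{X}}$. Player $\mathrm{P_A}$ has a winning strategy in the Gale–Stewart game $\mathfrak{G}$ if and only if $\mathcal{H}$ has an infinite Littlestone tree.
   Context: For $x_1,\ldots,x_t\in\mathcal{X}$ and $y_1,\ldots,y_t\in\{0,1\}$, let $\mathcal{H}_{x_1,y_1,\ldots,x_t,y_t}=\{h\in\mathcal{H}:h(x_s)=y_s,\ s\le t\}$. The game $\mathfrak{G}$ has two players $\mathrm{P_A}$ and $\mathrm{P_L}$; in each round $\tau\ge1$, $\mathrm{P_A}$ chooses $\xi_\tau\in\mathcal{X}$, then $\mathrm{P_L}$ chooses $\eta_\tau\in\{0,1\}$. $\mathrm{P_L}$ wins if $\mathcal{H}_{\xi_1,\eta_1,\ldots,\xi_\tau,\eta_\tau}=\varnothing$ for some finite $\tau$; otherwise $\mathrm{P_A}$ wins. A strategy for a player is a sequence of functions giving that player's move in round $\tau$ as a function of all previous moves (and, for $\mathrm{P_L}$, the current move $\xi_\tau$); it is winning if it wins against every play of the opponent. Littlestone tree of depth $d\le\infty$: a collection $\{x_{\mathbf u}:0\le k<d,\ \mathbf u\in\{0,1\}^k\}\subseteq\mathcal{X}$ such that for every $\mathbf y\in\{0,1\}^d$ and $n<d$ there is $h\in\mathcal{H}$ with $h(x_{\mathbf y_{\le k}})=y_{k+1}$ for $0\le k\le n$, $\mathbf y_{\le k}=(y_1,\ldots,y_k)$. Infinite: $d=\infty$. *)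

From mathcomp Require Import all_boot.
Set Implicit Arguments. Unset Strict Implicit. Unset Printing Implicit Defensive.

(* h is consistent with the labelled sample s = [(x_1,y_1);...;(x_t,y_t)],
   i.e. h ∈ H_{x_1,y_1,...,x_t,y_t} when h ∈ H. *)
Definition consistent (X : Type) (h : X -> bool) (s : seq (X * bool)) : bool :=
  all (fun p => h p.1 == p.2) s.

Definition version_nonempty (X : Type) (H : (X -> bool) -> Prop)
  (s : seq (X * bool)) : Prop :=
  exists h, H h /\ consistent h s.

(* Strategy of P_A: move in round tau as a function of all previous moves
   (xi_1,eta_1,...,xi_{tau-1},eta_{tau-1}); the round is the length + 1. *)
Definition stratA (X : Type) := seq (X * bool) -> X.
Definition stratL (X : Type) := seq (X * bool) -> X -> bool.

Fixpoint play (X : Type) (sA : stratA X) (sL : stratL X) (n : nat)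
  : seq (X * bool) :=
  match n with
  | 0 => [::]
  | n'.+1 => let h := play sA sL n' in
             let x := sA h in rcons h (x, sL h x)
  end.

Definition A_wins_play (X : Type) (H : (X -> bool) -> Prop)
  (sA : stratA X) (sL : stratL X) : Prop :=
  forall tau : nat, version_nonempty H (play sA sL tau).

Definition winning_stratA (X : Type) (H : (X -> bool) -> Prop)
  (sA : stratA X) : Prop :=
  forall sL : stratL X, A_wins_play H sA sL.

Definition PA_has_winning_strategy (X : Type) (H : (X -> bool) -> Prop)
  : Prop := exists sA : stratA X, winning_stratA H sA.

(* Prefix y_{<=k} = (y_1,...,y_k) of y : nat -> bool (0-indexed: y 0 = y_1). *)
Definition prefix (y : nat -> bool) (k : nat) : seq bool := mkseq y k.

(* Infinite Littlestone tree: nodes x_u for all finite binary strings u,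
   such that for every infinite path y and every n there is h ∈ H with
   h(x_{y_{<=k}}) = y_{k+1} for 0 <= k <= n. *)
Definition infinite_Littlestone_tree (X : Type) (H : (X -> bool) -> Prop)
  (x : seq bool -> X) : Prop :=
  forall (y : nat -> bool) (n : nat),
    exists h, H h /\ forall k, k <= n -> h (x (prefix y k)) = y k.

Definition has_infinite_Littlestone_tree (X : Type) (H : (X -> bool) -> Prop)
  : Prop := exists x : seq bool -> X, infinite_Littlestone_tree H x.

From Pilot Require Import Defs.
From mathcomp Require Import all_boot.
Set Implicit Arguments. Unset Strict Implicit.

(* The two objects are translations of each other.
   - A strategy sA of P_A, replayed against every finite string u of answers
     of P_L, yields the tree x_u := sA (replay sA u).  Along an infinite
     branch y, the play of sA against the learner answering y_(k+1) in round
     k+1 visits exactly the nodes x_(y_<=k); if sA is winning, the version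
     space after n+1 rounds is nonempty, which is the Littlestone condition.
   - Conversely a Littlestone tree x yields the strategy "query the node
     indexed by the labels given so far".  Whatever P_L does, the labels form
     a branch y of the tree and the play visits x_(y_<=k), so the Littlestone
     condition keeps every version space nonempty. *)

Lemma consistent_mkseq (X : Type) (h : X -> bool) (f : nat -> X * bool) (m : nat) :
  consistent h (mkseq f m) <-> (forall k, k < m -> h (f k).1 = (f k).2).
Proof.
rewrite /consistent /mkseq all_map; split.
- by move=> /allP Hf k Hk; apply/eqP; apply: Hf; rewrite mem_iota.
- by move=> Hf; apply/allP => k; rewrite mem_iota => Hk; apply/eqP; apply: Hf.
Qed.

Section Plays.
Variables (X : Type) (sA : stratA X) (sL : stratL X).

Definition move (k : nat) : X * bool :=
  let x := sA (play sA sL k) in (x, sL (play sA sL k) x).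

Lemma play_mkseq (m : nat) : play sA sL m = mkseq move m.
Proof. by elim: m => [//|m IH]; rewrite mkseqS /= -IH. Qed.

Lemma size_play (m : nat) : size (play sA sL m) = m.
Proof. by rewrite play_mkseq size_mkseq. Qed.

Lemma consistent_play (h : X -> bool) (m : nat) :
  consistent h (play sA sL m) <-> (forall k, k < m -> h (move k).1 = (move k).2).
Proof. by rewrite play_mkseq; apply: consistent_mkseq. Qed.

End Plays.

Definition replay (X : Type) (sA : stratA X) (u : seq bool) : seq (X * bool) :=
  foldl (fun s b => rcons s (sA s, b)) [::] u.

Definition strategy_tree (X : Type) (sA : stratA X) (u : seq bool) : X :=
  sA (replay sA u).

Definition branch_learner (X : Type) (y : nat -> bool) : stratL X :=
  fun s _ => y (size s).

(* Against the branch learner, the history after k rounds is the replay of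
   the prefix y_(<=k).  (Defs.prefix is qualified: seq.prefix shadows it.) *)
Lemma play_branch_learner (X : Type) (sA : stratA X) (y : nat -> bool) (k : nat) :
  play sA (branch_learner y) k = replay sA (Defs.prefix y k).
Proof.
elim: k => [//|k IH].
rewrite /Defs.prefix mkseqS /replay foldl_rcons -/(replay sA _) /= -IH.
by rewrite /branch_learner size_play.
Qed.

Lemma winning_strategy_tree (X : Type) (H : (X -> bool) -> Prop) (sA : stratA X) :
  winning_stratA H sA -> infinite_Littlestone_tree H (strategy_tree sA).
Proof.
move=> win y n; have [h [Hh Hcons]] := win (branch_learner y) n.+1.
exists h; split => // k Hk.
have := (consistent_play _ _ h n.+1).1 Hcons k Hk.
by rewrite /move /= /branch_learner size_play play_branch_learner.
Qed.

Definition tree_strategy (X : Type) (x : seq bool -> X) : stratA X :=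
  fun s => x (map snd s).

Lemma tree_strategy_move (X : Type) (x : seq bool -> X) (sL : stratL X) (k : nat) :
  let y i := (move (tree_strategy x) sL i).2 in
  (move (tree_strategy x) sL k).1 = x (Defs.prefix y k).
Proof.
by rewrite /= {1}/tree_strategy play_mkseq /prefix /mkseq -map_comp.
Qed.

Lemma tree_strategy_winning (X : Type) (H : (X -> bool) -> Prop) (x : seq bool -> X) :
  infinite_Littlestone_tree H x -> winning_stratA H (tree_strategy x).
Proof.
move=> tree sL tau.
have [h [Hh Hagree]] := tree (fun i => (move (tree_strategy x) sL i).2) tau.
exists h; split => //; apply/consistent_play => k Hk.
by rewrite tree_strategy_move; apply: Hagree; apply: ltnW.
Qed.

Theorem mainTheorem4 (X : Type) (H : (X -> bool) -> Prop) :
  PA_has_winning_strategy H <-> has_infinite_Littlestone_tree H.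
Proof.
split.
- by move=> [sA win]; exists (strategy_tree sA); apply: winning_strategy_tree.
- by move=> [x tree]; exists (tree_strategy x); apply: tree_strategy_winning.
Qed.
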